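(* Let $\mathcal V=\mathbb R^{d_v}$, $d(v,\hat v)=\|v-\hat v\|_2^2$, $\ell(v)=\max_{k\in[K]}(a_k^\top v+b_k)$ with $a_k\in\mathbb R^{d_v}$, $b_k\in\mathbb R$, $\hat\mu=\frac1n\sum_{i=1}^n\delta_{\hat v_i}$, $r\ge0$, $\theta_1,\theta_2>0$, and $\ell_\lambda(\hat v)=\sup_{v\in\mathcal V}\{\ell(v)-\lambda d(v,\hat v)\}$. Then the optimal value of $$\min_{\lambda\in\mathbb R_+}\ \lambda r+\lambda\theta_2\log\Big(\frac1n\sum_{i=1}^n\exp\Big(\frac{\ell_{\lambda\theta_1}(\hat v_i)}{\lambda\theta_2}\Big)\Big)$$ equals the optimal value of $$\begin{array}{lll}\min & \lambda r+t\\ \text{s.t.} & \lambda\in\mathbb R_+,\ t\in\mathbb R,\ \eta\in\mathbb R^n_+,\ p\in\mathbb R^n\\ & (\eta_i,\lambda\theta_2,p_i-t)\in\mathcal K_{\exp} & \forall i\in[n]\\ & a_k^\top\hat v_i+b_k+\frac{\|a_k\|_2^2}{4\lambda\theta_1}\le p_i & \forall k\in[K],\ i\in[n]\\ & \frac1n\sum_{i=1}^n\eta_i\le\lambda\theta_2.\end{array}$$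
   Context: $[n]=\{1,\dots,n\}$. The exponential cone is $\mathcal K_{\exp}=\{(x_1,x_2,x_3)\in\mathbb R^3:x_1\ge x_2\exp(x_3/x_2),\ x_2>0\}\cup\{(x_1,0,x_3):x_1\ge0,\ x_3\le0\}$. *)

From HB Require Import structures.
From mathcomp Require Import all_boot all_order all_algebra.
From mathcomp Require Import all_classical all_reals all_analysis.
Set Implicit Arguments. Unset Strict Implicit. Unset Printing Implicit Defensive.
Import Order.TTheory GRing.Theory Num.Theory.
Local Open Scope ring_scope.
Local Open Scope classical_set_scope.

Section Defs.
Variable R : realType.

Definition Kexp (x1 x2 x3 : R) : Prop :=
  (0 < x2 /\ x2 * expR (x3 / x2) <= x1) \/ (x2 = 0 /\ 0 <= x1 /\ x3 <= 0).

Definition dotv (dv : nat) (u v : 'rV[R]_dv) : R := \sum_j u ord0 j * v ord0 j.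
Definition sqdist (dv : nat) (v w : 'rV[R]_dv) : R := dotv (v - w) (v - w).

(** Piecewise-affine loss l(v) = max_k (a_k^T v + b_k) (extended-real valued;
    finite as soon as K >= 1). *)
Definition ell (dv K : nat) (a : 'I_K -> 'rV[R]_dv) (b : 'I_K -> R)
    (v : 'rV[R]_dv) : \bar R :=
  \big[Order.max/-oo%E]_(k < K) ((dotv (a k) v + b k)%:E).

Definition ell_lam (dv K : nat) (a : 'I_K -> 'rV[R]_dv) (b : 'I_K -> R)
    (lam : R) (vh : 'rV[R]_dv) : \bar R :=
  ereal_sup [set (ell a b v - (lam * sqdist v vh)%:E)%E | v in [set: 'rV[R]_dv]].

(** For lam > 0 the values l_{lam th1}(vh_i)
    are finite (quadratic penalty), so [fine] is harmless.  At lam = 0 we use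
    the standard closure (perspective) convention:
    0 * th2 * log((1/n) sum exp(x_i/0)) := max_i x_i (possibly +oo). *)
Definition obj1 (dv K n : nat) (a : 'I_K -> 'rV[R]_dv) (b : 'I_K -> R)
    (vh : 'I_n -> 'rV[R]_dv) (r th1 th2 lam : R) : \bar R :=
  if 0 < lam then
    (lam * r + lam * th2 *
       ln (n%:R^-1 * \sum_(i < n)
             expR (fine (ell_lam a b (lam * th1) (vh i)) / (lam * th2))))%:E
  else \big[Order.max/-oo%E]_(i < n) ell_lam a b 0 (vh i).

(** ||a||^2 / (4 lam th1), with the perspective convention at lam = 0:
    0 if a = 0 and +oo otherwise. *)
Definition persp (dv : nat) (a : 'rV[R]_dv) (lam th1 : R) : \bar R :=
  if 0 < lam then (dotv a a / (4 * lam * th1))%:E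
  else if a == 0 then 0%E else +oo%E.

Definition feas2 (dv K n : nat) (a : 'I_K -> 'rV[R]_dv) (b : 'I_K -> R)
    (vh : 'I_n -> 'rV[R]_dv) (th1 th2 : R)
    (lam t : R) (eta p : 'I_n -> R) : Prop :=
  [/\ 0 <= lam,
      (forall i, 0 <= eta i),
      (forall i, Kexp (eta i) (lam * th2) (p i - t)),
      (forall k i, ((dotv (a k) (vh i) + b k)%:E + persp (a k) lam th1 <= (p i)%:E)%E)
    & n%:R^-1 * \sum_(i < n) eta i <= lam * th2].

End Defs.

(* For lam > 0 the inner supremum has a closed form: completing the square
   coordinatewise gives
     l_{lam th1}(vh) = max_k (a_k . vh + b_k + |a_k|^2 / (4 lam th1)),
   so the K n affine constraints say exactly p_i >= l_{lam th1}(vh_i).  With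
   c = lam th2, the cones (eta_i, c, p_i - t) together with (1/n) sum eta_i <= c
   encode t >= c log((1/n) sum exp(p_i / c)), with equality attained at
   eta_i = c exp((p_i - t) / c).  At lam = 0 the perspective conventions make
   both problems infinite unless every a_k vanishes, and otherwise both equal
   max_k b_k.  So the two problems agree for each fixed lam, hence so do their
   infima over lam. *)

From HB Require Import structures.
From mathcomp Require Import all_boot all_order all_algebra.
From mathcomp Require Import all_classical all_reals all_analysis.
From mathcomp Require Import ring lra.
Import Order.TTheory GRing.Theory Num.Theory.
Local Open Scope ring_scope.
Local Open Scope classical_set_scope.

Set Implicit Arguments.
Unset Strict Implicit.
Unset Printing Implicit Defensive.

Section InnerProduct.
Variables (R : realType) (dv : nat).
Implicit Types (u v w : 'rV[R]_dv) (mu : R).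

Lemma dot0v v : dotv 0 v = 0.
Proof. by rewrite /dotv big1 // => j _; rewrite mxE mul0r. Qed.

Lemma dotvZ u v (s : R) : dotv u (s *: v) = s * dotv u v.
Proof. by rewrite /dotv mulr_sumr; apply: eq_bigr => j _; rewrite mxE mulrCA. Qed.

Lemma dotvv_gt0 u : u != 0 -> 0 < dotv u u.
Proof.
move=> u0; have sq_ge0 (j : 'I_dv) : true -> 0 <= u ord0 j * u ord0 j.
  by rewrite -expr2 sqr_ge0.
rewrite lt_neqAle sumr_ge0 // andbT eq_sym; apply: contra u0 => /eqP uu0.
apply/eqP/matrixP => i j; rewrite (ord1 i) mxE.
by have /eqP := psumr_eq0P sq_ge0 uu0 (i := j) isT; rewrite mulf_eq0 orbb => /eqP.
Qed.

Lemma dotv_sub_penaltyE mu u v w : 0 < mu ->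
  dotv u w + dotv u u / (4 * mu) - (dotv u v - mu * sqdist v w)
  = \sum_j (u ord0 j - 2 * mu * (v ord0 j - w ord0 j)) ^+ 2 / (4 * mu).
Proof.
move=> mu0; rewrite /sqdist /dotv mulr_sumr mulr_suml -big_split -!sumrB.
apply: eq_bigr => j _; rewrite /= !mxE.
by field; rewrite ?mulf_neq0 // gt_eqF.
Qed.

Lemma dotv_sub_penalty_le mu u v w : 0 < mu ->
  dotv u v - mu * sqdist v w <= dotv u w + dotv u u / (4 * mu).
Proof.
move=> mu0; rewrite -subr_ge0 dotv_sub_penaltyE //.
by apply: sumr_ge0 => j _; rewrite divr_ge0 ?sqr_ge0 // ltW // mulr_gt0.
Qed.

Lemma dotv_sub_penalty_max mu u w : 0 < mu ->
  dotv u (w + (2 * mu)^-1 *: u) - mu * sqdist (w + (2 * mu)^-1 *: u) w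
  = dotv u w + dotv u u / (4 * mu).
Proof.
move=> mu0; apply/eqP; rewrite eq_sym -subr_eq0 dotv_sub_penaltyE //.
apply/eqP/big1 => j _; rewrite !mxE.
by field; rewrite ?mulf_neq0 // gt_eqF.
Qed.

End InnerProduct.

Section ExtendedInfima.
Variable R : realType.

Lemma ereal_inf_attained (S : set (\bar R)) x :
  S x -> lbound S x -> ereal_inf S = x.
Proof.
by move=> Sx Sx_lb; apply/eqP; rewrite eq_le ereal_inf_lbound ?le_ereal_inf_tmp.
Qed.

Lemma ereal_inf_nested (T : Type) (D : set T) (f : T -> \bar R)
    (S : T -> set (\bar R)) :
  (forall x, D x -> f x = ereal_inf (S x)) -> (forall x y, S x y -> D x) ->
  ereal_inf [set f x | x in D] = ereal_inf [set y | exists x, S x y].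
Proof.
move=> fE SD; apply/eqP; rewrite eq_le; apply/andP; split.
- apply: le_ereal_inf_tmp => y [x Sxy]; have Dx := SD _ _ Sxy.
  apply: (@le_trans _ _ (f x)); first by apply: ereal_inf_lbound; exists x.
  by rewrite fE //; apply: ereal_inf_lbound.
- apply: le_ereal_inf_tmp => _ [x Dx <-]; rewrite fE //.
  by apply: ereal_inf_le_tmp => y Sxy; exists x.
Qed.

Lemma bigmax_EFin_arg (I : finType) (i0 : I) (F : I -> R) :
  \big[Order.max/-oo%E]_i (F i)%:E = (F [arg max_(i > i0) F i]%O)%:E.
Proof.
case: arg_maxP => // i _ Fi_max; apply/eqP; rewrite eq_le le_bigmax.
by rewrite bigmax_le ?leNye // => j _; rewrite lee_fin Fi_max.
Qed.

End ExtendedInfima.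

Section PiecewiseAffineLoss.
Variables (R : realType) (dv K : nat) (a : 'I_K -> 'rV[R]_dv) (b : 'I_K -> R).

Definition ell_lam_piece (mu : R) (vh : 'rV[R]_dv) (k : 'I_K) : R :=
  dotv (a k) vh + b k + dotv (a k) (a k) / (4 * mu).

Lemma le_ell v k : ((dotv (a k) v + b k)%:E <= ell a b v)%E.
Proof. exact: le_bigmax. Qed.

Lemma ell_lamE mu vh : 0 < mu ->
  ell_lam a b mu vh = \big[Order.max/-oo%E]_(k < K) (ell_lam_piece mu vh k)%:E.
Proof.
move=> mu0; apply/eqP; rewrite eq_le; apply/andP; split.
- apply: ge_ereal_sup => _ [v _ <-]; rewrite leeBlDr //.
  apply: bigmax_le => [|k _]; first by rewrite leNye.
  apply: le_trans (leeD2r _ (le_bigmax _ _ k)).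
  rewrite -EFinD lee_fin /ell_lam_piece.
  have := dotv_sub_penalty_le (a k) v vh mu0; lra.
- apply: bigmax_le => [|k _]; first by rewrite leNye.
  set v := vh + (2 * mu)^-1 *: a k.
  apply: le_trans (ereal_sup_ubound _); last by exists v.
  apply: le_trans (leeD2r _ (le_ell v k)).
  rewrite -EFinB lee_fin /ell_lam_piece.
  have := dotv_sub_penalty_max (a k) vh mu0; rewrite -/v; lra.
Qed.

Lemma fine_ell_lam_le (K_gt0 : (0 < K)%N) mu vh p : 0 < mu ->
  fine (ell_lam a b mu vh) <= p <-> forall k, ell_lam_piece mu vh k <= p.
Proof.
move=> mu0; rewrite ell_lamE // (bigmax_EFin_arg (Ordinal K_gt0)) /=.
case: arg_maxP => // k _ k_max.
by split=> [kp j|]; [exact: le_trans (k_max j isT) kp | exact].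
Qed.

Lemma ell_lam0 vh : ell_lam a b 0 vh = ereal_sup (range (ell a b)).
Proof. by congr ereal_sup; apply: eq_imagel => v _; rewrite mul0r sube0. Qed.

Lemma ell_sup_pinfty k : a k != 0 -> ereal_sup (range (ell a b)) = +oo%E.
Proof.
move=> ak0; apply: eq_infty => y; set s := (y - b k) / dotv (a k) (a k).
apply: le_trans (ereal_sup_ubound _); last by exists (s *: a k).
apply: le_trans (le_ell _ k).
by rewrite dotvZ /s divfK ?gt_eqF ?dotvv_gt0 // lee_fin subrK.
Qed.

Lemma ell_sup_const : (forall k, a k = 0) ->
  ereal_sup (range (ell a b)) = \big[Order.max/-oo%E]_(k < K) (b k)%:E.
Proof.
move=> a0; have ellE v : ell a b v = \big[Order.max/-oo%E]_(k < K) (b k)%:E.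
  by apply: eq_bigr => k _; rewrite a0 dot0v add0r.
apply/eqP; rewrite eq_le; apply/andP; split.
  by apply: ge_ereal_sup => _ [v _ <-]; rewrite ellE.
by apply: le_trans (ereal_sup_ubound _); [rewrite -(ellE 0) | exists 0].
Qed.

End PiecewiseAffineLoss.

Section LogSumExp.
Variables (R : realType) (n : nat).
Hypothesis n_gt0 : (0 < n)%N.
Implicit Types (c t : R) (p q eta : 'I_n -> R).

Definition lse c p : R := c * ln (n%:R^-1 * \sum_(i < n) expR (p i / c)).

Lemma lse_mean_gt0 c p : 0 < n%:R^-1 * \sum_(i < n) expR (p i / c).
Proof.
rewrite mulr_gt0 ?invr_gt0 ?ltr0n // (bigD1 (Ordinal n_gt0)) //=.
by rewrite ltr_wpDr ?expR_gt0 // sumr_ge0 // => i _; rewrite expR_ge0.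
Qed.

Lemma le_lse c p q : 0 < c -> (forall i, p i <= q i) -> lse c p <= lse c q.
Proof.
move=> c0 pq; rewrite ler_pM2l // ler_ln ?posrE ?lse_mean_gt0 //.
rewrite ler_pM2l ?invr_gt0 ?ltr0n //; apply: ler_sum => i _.
by rewrite ler_expR ler_pM2r ?invr_gt0.
Qed.

Lemma lse_le_Kexp c t eta p : 0 < c ->
  (forall i, Kexp (eta i) c (p i - t)) -> n%:R^-1 * \sum_(i < n) eta i <= c ->
  lse c p <= t.
Proof.
move=> c0 cone mean_eta.
have exp_le i : expR (p i / c) <= eta i / c * expR (t / c).
  case: (cone i) => [[_ le_eta] | [c_eq0 _]]; last by rewrite c_eq0 ltxx in c0.
  rewrite -[p i](subrK t) mulrDl expRD ler_wpM2r ?expR_ge0 //.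
  by rewrite ler_pdivlMr // mulrC.
rewrite /lse -ler_pdivlMl // [c^-1 * t]mulrC -[t / c]expRK.
rewrite ler_ln ?posrE ?expR_gt0 ?lse_mean_gt0 //.
apply: (@le_trans _ _ (n%:R^-1 * \sum_(i < n) (eta i / c * expR (t / c)))).
  by rewrite ler_pM2l ?invr_gt0 ?ltr0n //; apply: ler_sum => i _.
rewrite -!mulr_suml mulrA -[leRHS]mul1r ler_pM2r ?expR_gt0 //.
by rewrite mulrA ler_pdivrMr // mul1r.
Qed.

Lemma Kexp_lse c p : 0 < c -> exists eta,
  [/\ forall i, 0 <= eta i, forall i, Kexp (eta i) c (p i - lse c p)
    & n%:R^-1 * \sum_(i < n) eta i <= c].
Proof.
move=> c0; set S := n%:R^-1 * \sum_(i < n) expR (p i / c).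
exists (fun i => c * expR ((p i - lse c p) / c)); split=> [i|i|].
- by rewrite mulr_ge0 ?expR_ge0 ?ltW.
- by left.
have lseE : lse c p / c = ln S by rewrite /lse mulrC mulKf ?gt_eqF.
under eq_bigr => i _ do
  rewrite mulrBl lseE expRD expRN lnK ?posrE ?lse_mean_gt0 // mulrCA.
by rewrite -mulr_suml mulrA -/S mulrC divfK ?gt_eqF ?lse_mean_gt0.
Qed.

End LogSumExp.

Section ConicReformulation.
Variables (R : realType) (dv K n : nat).
Variables (a : 'I_K -> 'rV[R]_dv) (b : 'I_K -> R) (vh : 'I_n -> 'rV[R]_dv).
Variables (r th1 th2 : R).
Hypotheses (K_gt0 : (0 < K)%N) (n_gt0 : (0 < n)%N).
Hypotheses (th1_gt0 : 0 < th1) (th2_gt0 : 0 < th2).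

Definition feas_values (lam : R) : set (\bar R) :=
  [set x | exists t (eta p : 'I_n -> R),
     feas2 a b vh th1 th2 lam t eta p /\ x = (lam * r + t)%:E].

Lemma persp_constraint_pos lam v k p : 0 < lam ->
  ((dotv (a k) v + b k)%:E + persp (a k) lam th1 <= p%:E)%E
  = (ell_lam_piece a b (lam * th1) v k <= p).
Proof.
by move=> lam_gt0; rewrite /persp lam_gt0 -EFinD lee_fin /ell_lam_piece mulrA.
Qed.

Lemma obj1_pos lam : 0 < lam ->
  obj1 a b vh r th1 th2 lam = ereal_inf (feas_values lam).
Proof.
move=> lam_gt0; have c_gt0 : 0 < lam * th2 by rewrite mulr_gt0.
have mu_gt0 : 0 < lam * th1 by rewrite mulr_gt0.
set P := fun i => fine (ell_lam a b (lam * th1) (vh i)).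
have P_le i p : P i <= p <->
    forall k, ((dotv (a k) (vh i) + b k)%:E + persp (a k) lam th1 <= p%:E)%E.
  rewrite fine_ell_lam_le //; split=> le_p k; have := le_p k;
  by rewrite persp_constraint_pos.
apply: esym; apply: ereal_inf_attained.
- have [eta [eta_ge0 cone mean_eta]] := Kexp_lse n_gt0 P c_gt0.
  exists (lse (lam * th2) P), eta, P; split; last by rewrite /obj1 lam_gt0.
  by split=> // [|k i]; [exact: ltW | exact: (P_le i (P i)).1 (lexx _) k].
- move=> _ [t [eta [p [[_ _ cone cstr mean_eta] ->]]]].
  rewrite /obj1 lam_gt0 lee_fin lerD2l.
  apply: le_trans (lse_le_Kexp n_gt0 c_gt0 cone mean_eta).
  by apply: le_lse => // i; apply/P_le => k; apply: cstr.
Qed.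

Lemma obj1_0 : obj1 a b vh r th1 th2 0 = ereal_sup (range (ell a b)).
Proof.
rewrite /obj1 ltxx; under eq_bigr do rewrite ell_lam0.
by rewrite (bigmax_eq_arg _ (Ordinal n_gt0)) // => i _; rewrite leNye.
Qed.

Lemma feas2_0_slopes_eq0 t eta p :
  feas2 a b vh th1 th2 0 t eta p -> forall k, a k = 0.
Proof.
move=> [_ _ _ cstr _] k; have := cstr k (Ordinal n_gt0).
by rewrite /persp ltxx; case: eqP => // _; rewrite addey.
Qed.

Lemma obj1_0_eq_inf : obj1 a b vh r th1 th2 0 = ereal_inf (feas_values 0).
Proof.
rewrite obj1_0.
have [/forallP a_eq0 | /forallPn [k ak_neq0]] := boolP [forall k, a k == 0].
- have a0 k : a k = 0 by apply/eqP/a_eq0.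
  rewrite ell_sup_const // (bigmax_EFin_arg (Ordinal K_gt0)).
  case: arg_maxP => // k _ k_max; apply: esym; apply: ereal_inf_attained.
  + exists (b k), (fun=> 0), (fun=> b k); split; last by rewrite mul0r add0r.
    split=> // [i|k' i|]; first by right; rewrite mul0r subrr.
      by rewrite /persp ltxx a0 eqxx adde0 dot0v add0r lee_fin; exact: k_max.
    by rewrite big1 // mulr0 mul0r.
  + move=> _ [t [eta [p [[_ _ cone cstr _] ->]]]].
    have := cstr k (Ordinal n_gt0).
    rewrite /persp ltxx a0 eqxx adde0 dot0v add0r mul0r add0r !lee_fin.
    case: (cone (Ordinal n_gt0)) => [[] | [_ [_ le_t]] le_p]; last by lra.
    by rewrite mul0r ltxx.
- rewrite (ell_sup_pinfty b ak_neq0); apply/esym/ereal_inf_pinfty.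
  move=> y [t [eta [p [feas _]]]].
  by move: ak_neq0; rewrite (feas2_0_slopes_eq0 feas) eqxx.
Qed.

Lemma obj1_eq_inf lam : 0 <= lam ->
  obj1 a b vh r th1 th2 lam = ereal_inf (feas_values lam).
Proof.
rewrite le_eqVlt => /predU1P [<- | lam_gt0].
  exact: obj1_0_eq_inf.
exact: obj1_pos.
Qed.

End ConicReformulation.

Theorem mainTheorem10 (R : realType) (dv K n : nat)
    (a : 'I_K -> 'rV[R]_dv) (b : 'I_K -> R) (vh : 'I_n -> 'rV[R]_dv)
    (r th1 th2 : R) :
  (0 < K)%N -> (0 < n)%N -> 0 <= r -> 0 < th1 -> 0 < th2 ->
  ereal_inf [set obj1 a b vh r th1 th2 lam | lam in [set lam : R | 0 <= lam]]
  = ereal_inf [set x : \bar R | exists lam t (eta p : 'I_n -> R),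
                  feas2 a b vh th1 th2 lam t eta p /\ x = ((lam * r + t)%:E)%E].
Proof.
move=> K_gt0 n_gt0 _ th1_gt0 th2_gt0.
apply: (ereal_inf_nested (S := feas_values a b vh r th1 th2)).
  exact: obj1_eq_inf.
by move=> lam y [t [eta [p [[]]]]].
Qed.
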